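(* For all integers $n\ge1$ and $r\ge1$, \[ \sum_{k=1}^{n}\binom{k-1}{r-1}\omega(n-k)=\sum_{\substack{m+k=n\\ m\ge1,\ k\ge0}}c_\psi(m,r)\,\Omega_m(k). \]
   Context: A composition of $n$ is an ordered sequence $(a_1,\dots,a_r)$ of positive integers with $a_1+\dots+a_r=n$; it is relatively prime if $\gcd(a_1,\dots,a_r)=1$. $c_\psi(n,r)$ is the number of relatively prime compositions of $n$ with exactly $r$ parts. $\omega:\mathbb{Z}\to\mathbb{Z}$ is defined by $\omega(0)=1$; $\omega(m)=(-1)^j$ if $m=\frac{3j^2\pm j}{2}$ for some integer $j\ge1$; $\omega(m)=0$ otherwise (in particular for $m<0$). For $m\ge1$ and integer $k$, $\Omega_m(k)=\sum_{j\ge0}\omega(k-jm)=\omega(k)+\omega(k-m)+\omega(k-2m)+\cdots$. *)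

From mathcomp Require Import all_boot all_order all_algebra.
Set Implicit Arguments. Unset Strict Implicit. Unset Printing Implicit Defensive.
Import Order.TTheory GRing.Theory Num.Theory.

Definition gcd_seq (s : seq nat) : nat := foldr gcdn 0%N s.

(* A composition of n with exactly r parts is a sequence (a_1..a_r) of positive
   integers summing to n; each part is <= n, so we encode it as an r-tuple of
   'I_n.+1.  c_psi n r counts those that are relatively prime. *)
Definition is_rp_composition (n r : nat) (t : r.-tuple 'I_n.+1) : bool :=
  [&& all (fun a : 'I_n.+1 => 0 < a)%N t,
      (\sum_(a <- t) (a : nat) == n)%N &
      gcd_seq (map (fun a : 'I_n.+1 => (a : nat)) t) == 1%N].

Definition c_psi (n r : nat) : nat :=
  #|[set t : r.-tuple 'I_n.+1 | is_rp_composition t]|.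

(* omega on nonnegative integers: omega 0 = 1; omega m = (-1)^j if
   m = (3j^2 +- j)/2 for some j >= 1 (such j is <= m, and unique); else 0. *)
Definition omega_nat (m : nat) : int :=
  if m == 0%N then 1%R
  else match [pick j : 'I_m.+1 | (0 < j)%N &&
               ((m.*2 == 3 * j ^ 2 + j)%N || (m.*2 == 3 * j ^ 2 - j)%N)] with
       | Some j => ((-1) ^+ j)%R
       | None => 0%R
       end.

Definition omega (m : int) : int :=
  match m with
  | Posz k => omega_nat k
  | Negz _ => 0%R
  end.

(* Omega_m(k) = sum_{j>=0} omega(k - j m); for m >= 1 and k >= 0 the terms with
   j > k have negative argument and vanish, so the sum over j <= k is exact. *)
Definition Omega (m k : nat) : int :=
  (\sum_(j < k.+1) omega (k%:Z - (j * m)%N%:Z))%R.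

From mathcomp Require Import all_boot all_order all_algebra.
From mathcomp Require Import zify.
Set Implicit Arguments. Unset Strict Implicit. Unset Printing Implicit Defensive.
Import Order.TTheory GRing.Theory Num.Theory.

(* Since Omega_m(n - m) is the sum of omega(n - k) over the multiples k <= n
   of m, exchanging the sums on the right-hand side gives the sum over k of
   (sum_{m | k} c_psi(m, r)) omega(n - k).  A composition of k into r parts
   with gcd g is g times a relatively prime composition of k / g, so the inner
   sum counts all compositions of k into r parts, namely C(k - 1, r - 1). *)

Lemma dvdn_gcd_seq s x : x \in s -> gcd_seq s %| x.
Proof.
elim: s => [|y s IHs] //=; rewrite inE => /orP[/eqP->|xs]; first exact: dvdn_gcdl.
exact: dvdn_trans (dvdn_gcdr _ _) (IHs xs).
Qed.

Lemma dvdn_gcd_seq_sumn s : gcd_seq s %| sumn s.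
Proof.
elim: s => [|y s IHs] //=.
by rewrite dvdn_add ?dvdn_gcdl // (dvdn_trans (dvdn_gcdr _ _) IHs).
Qed.

Lemma gcd_seq_mulr s d : gcd_seq [seq x * d | x <- s] = gcd_seq s * d.
Proof. by elim: s => [|y s IHs] //=; rewrite IHs muln_gcdl. Qed.

Definition is_composition (N : nat) (s : seq nat) : bool :=
  all (fun x => 0 < x) s && (sumn s == N).

Lemma is_composition_nil N : is_composition N [::] = (N == 0).
Proof. by rewrite /is_composition eq_sym. Qed.

Lemma is_composition_cons N a s :
  is_composition N (a :: s) = [&& 0 < a, a <= N & is_composition (N - a) s].
Proof.
rewrite /is_composition /=; case: (posnP a) => //= _; rewrite andbCA; congr andb.
by apply/eqP/andP => [<-|[aN /eqP->]]; [rewrite leq_addr addKn | rewrite subnKC].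
Qed.

Lemma is_composition_mulr N s d : 0 < d ->
  is_composition (N * d) [seq x * d | x <- s] = is_composition N s.
Proof.
move=> d_gt0; rewrite /is_composition all_map.
have -> : sumn [seq x * d | x <- s] = sumn s * d.
  by elim: s => [|y s IHs] //=; rewrite IHs mulnDl.
rewrite eqn_pmul2r //.
by congr andb; apply: eq_all => x /=; rewrite muln_gt0 d_gt0 andbT.
Qed.

Definition ncompositions (r N : nat) : nat :=
  if r is r'.+1 then (if N is N'.+1 then 'C(N', r') else 0) else (N == 0 : nat).

Lemma ncompositionsSS r N :
  ncompositions r.+1 N.+1 = ncompositions r N + ncompositions r.+1 N.
Proof.
case: r => [|r]; first by case: N => [|N] //=; rewrite !bin0.
by case: N => [|N] /=; rewrite ?bin0n // binS addnC.
Qed.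

Lemma ncompositionsS r N :
  ncompositions r.+1 N = \sum_(1 <= a < N.+1) ncompositions r (N - a).
Proof.
elim: N => [|N IHN]; first by rewrite big_geq.
rewrite big_nat_recl // ncompositionsSS IHN subSS subn0.
by congr (_ + _); apply: eq_bigr => a _; rewrite subSS.
Qed.

Definition sum_tuples (B r : nat) (F : seq nat -> nat) : nat :=
  \sum_(t : r.-tuple 'I_B) F (map val t).

Lemma sum_tuples0 B F : sum_tuples B 0 F = F [::].
Proof.
rewrite /sum_tuples (eq_bigr (fun _ => F [::])) => [|t _]; last by rewrite tuple0.
by rewrite sum_nat_const card_tuple mul1n.
Qed.

Lemma sum_tuplesS B r F :
  sum_tuples B r.+1 F = \sum_(a < B) sum_tuples B r (fun s => F (val a :: s)).
Proof.
rewrite /sum_tuples pair_bigA /=.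
rewrite (reindex (fun p : 'I_B * r.-tuple 'I_B => [tuple of p.1 :: p.2])) //=.
exists (fun t : r.+1.-tuple 'I_B => (thead t, [tuple of behead t])).
  by move=> [a t] _ /=; rewrite theadE; congr pair; apply: val_inj.
by move=> t _; rewrite [in RHS](tuple_eta t).
Qed.

Lemma sum_tuples_pred B r (P : pred (seq nat)) :
  sum_tuples B r P = \sum_(t : r.-tuple 'I_B | P (map val t)) 1.
Proof. by rewrite /sum_tuples [RHS]big_mkcond; apply: eq_bigr => t _; case: (P _). Qed.

Lemma sum_tuples_composition B r N : N < B ->
  sum_tuples B r (is_composition N) = ncompositions r N.
Proof.
elim: r N => [|r IHr] N ltNB; first by rewrite sum_tuples0 is_composition_nil.
rewrite sum_tuplesS ncompositionsS.
have first_part (a : 'I_B) :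
    sum_tuples B r (fun s => is_composition N (val a :: s)) =
    if 0 < val a <= N then ncompositions r (N - a) else 0.
  rewrite -(IHr (N - a)); last exact: leq_ltn_trans (leq_subr _ _) ltNB.
  rewrite /sum_tuples; under eq_bigr do rewrite is_composition_cons andbA.
  by case: (0 < val a <= N) => //; rewrite big1.
rewrite (eq_bigr _ (fun a _ => first_part a)) -big_mkcond.
rewrite (@big_nat_widen _ _ _ 1 N.+1 B) // (@big_nat_widenl _ _ _ 1 0) // big_mkord.
by apply: eq_bigl => a; rewrite ltnS andbC.
Qed.

Lemma c_psi_sum_tuples m r :
  c_psi m r = sum_tuples m.+1 r (fun s => is_composition m s && (gcd_seq s == 1)).
Proof.
rewrite sum_tuples_pred /c_psi -sum1_card; apply: eq_bigl => t.
by rewrite inE /is_rp_composition /is_composition all_map sumnE big_map andbA.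
Qed.

Lemma sum_tuples_gcd_eq N m r : 0 < N -> m %| N ->
  sum_tuples N.+1 r (fun s => is_composition N s && (gcd_seq s == N %/ m)) =
  c_psi m r.
Proof.
move=> N_gt0 mN; rewrite c_psi_sum_tuples !sum_tuples_pred.
(* Scaling by d = N / m maps the relatively prime compositions of m
   bijectively onto the compositions of N with gcd d. *)
set d := N %/ m; have Nmd : N = m * d by rewrite /d mulnC divnK.
have d_gt0 : 0 < d by move: N_gt0; rewrite Nmd muln_gt0 => /andP[].
have scale_ord (a : 'I_m.+1) : a * d < N.+1.
  by rewrite ltnS Nmd leq_mul2r -ltnS ltn_ord orbT.
pose scale (t : r.-tuple 'I_m.+1) :=
  map_tuple (fun a : 'I_m.+1 => inord (a * d) : 'I_N.+1) t.
have scaleE t : map val (scale t) = [seq x * d | x <- map val t].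
  by rewrite /= -!map_comp; apply: eq_map => a /=; rewrite inordK.
rewrite (reindex scale) /=; last first.
  exists (map_tuple (fun b : 'I_N.+1 => inord (b %/ d) : 'I_m.+1)) => [t _|t].
    apply: val_inj; rewrite /= -map_comp -[RHS]map_id; apply: eq_map => a /=.
    by apply: ord_inj; rewrite (inordK (scale_ord a)) mulnK // inordK.
  rewrite inE => /andP[_ /eqP gcd_d]; apply: val_inj.
  rewrite /= -map_comp -[RHS]map_id; apply/eq_in_map => b bt /=.
  have db : d %| b by rewrite -gcd_d dvdn_gcd_seq // map_f.
  have lt_bd : b %/ d < m.+1 by rewrite ltnS leq_divLR // -Nmd -ltnS.
  by apply: ord_inj; rewrite (inordK lt_bd) divnK // inordK.
apply: eq_bigl => t; rewrite scaleE Nmd is_composition_mulr // gcd_seq_mulr.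
by rewrite -{2}[d]mul1n eqn_pmul2r.
Qed.

Lemma gcd_seq_eq_div N s m : 0 < m -> gcd_seq s %| N ->
  (m %| N) && (gcd_seq s == N %/ m) = (m * gcd_seq s == N).
Proof.
move=> m_gt0 gN; case: (boolP (m %| N)) => [mN|mNN] /=.
  by rewrite eqn_div // mulnC.
by apply/esym/negbTE; apply: contra mNN => /eqP<-; apply: dvdn_mulr.
Qed.

Lemma sum_divisors_gcd_seq N s : 0 < N -> is_composition N s ->
  \sum_(1 <= m < N.+1 | m %| N) (gcd_seq s == N %/ m) = 1.
Proof.
move=> N_gt0 /andP[_ /eqP sumN].
have gN : gcd_seq s %| N by rewrite -sumN dvdn_gcd_seq_sumn.
have g_gt0 : 0 < gcd_seq s by apply: dvdn_gt0 gN.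
rewrite big_mkcond /=.
transitivity (\sum_(1 <= m < N.+1 | m == N %/ gcd_seq s) 1).
  rewrite [RHS]big_mkcond; apply: eq_big_nat => m /andP[m_gt0 _].
  by rewrite (eqn_div _ g_gt0 gN) -gcd_seq_eq_div //; case: (m %| N).
by rewrite big_nat1_eq divn_gt0 // dvdn_leq //= ltnS leq_div.
Qed.

Lemma sum_c_psi_divisors M N r : 0 < N -> N < M -> 0 < r ->
  \sum_(1 <= m < M | m %| N) c_psi m r = 'C(N.-1, r.-1).
Proof.
move=> N_gt0 lt_NM r_gt0.
transitivity (\sum_(1 <= m < N.+1 | m %| N) c_psi m r).
  rewrite (@big_nat_widen _ _ _ 1 N.+1 M) //; apply: eq_bigl => m.
  by rewrite andb_idr // ltnS; apply: dvdn_leq.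
have -> : 'C(N.-1, r.-1) = ncompositions r N.
  by case: r r_gt0 => // r _; case: N N_gt0 lt_NM.
rewrite -(sum_tuples_composition r (ltnSn N)).
rewrite -(eq_bigr _ (fun m => sum_tuples_gcd_eq r N_gt0)) /sum_tuples exchange_big.
apply: eq_bigr => t _.
case: (boolP (is_composition N _)) => [/(sum_divisors_gcd_seq N_gt0) sum1|_] /=.
  exact: sum1.
by rewrite big1.
Qed.

Local Open Scope ring_scope.

Lemma sum_multiples (R : nmodType) m n (F : nat -> R) : (0 < m)%N ->
  \sum_(1 <= k < n.+1 | (m %| k)%N) F k = \sum_(1 <= j < (n %/ m)%N.+1) F (j * m)%N.
Proof.
move=> m_gt0; elim: n => [|n IHn]; first by rewrite div0n !big_geq.
rewrite big_mkcond big_nat_recr //= -big_mkcond IHn divnS //.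
case: (boolP (m %| n.+1)%N) => [mn|_]; last by rewrite addr0.
rewrite add1n [RHS]big_nat_recr //=; congr (_ + F _).
by rewrite -{1}(divnK mn) divnS // mn.
Qed.

Lemma omega_neg (x : int) : x < 0 -> omega x = 0.
Proof. by case: x. Qed.

Lemma Omega_sum_multiples m n : (0 < m <= n)%N ->
  Omega m (n - m) = \sum_(1 <= k < n.+1 | (m %| k)%N) omega (n - k)%N%:Z.
Proof.
move=> /andP[m_gt0 le_mn]; rewrite sum_multiples // big_add1 /= /Omega.
have le_q : (n %/ m <= (n - m).+1)%N.
  by rewrite -ltnS ltn_divLR //; nia.
rewrite -(big_mkord xpredT (fun j => omega ((n - m)%N%:Z - (j * m)%N%:Z))).
rewrite (big_cat_nat _ (n := n %/ m)) //=.
rewrite [X in _ + X]big1_seq ?addr0 => [|j /andP[_]]; last first.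
  rewrite mem_index_iota => /andP[le_qj _]; apply: omega_neg.
  have lt_nj : (n < j.+1 * m)%N.
    by apply: leq_trans (ltn_ceil n m_gt0) _; rewrite leq_mul2r ltnS le_qj orbT.
  by rewrite subr_lt0 ltz_nat; lia.
apply: eq_big_nat => j /andP[_ lt_jq].
have le_jm : (j.+1 * m <= n)%N.
  by apply: leq_trans (leq_trunc_div n m); rewrite leq_mul2r lt_jq orbT.
suff -> : (n - m)%N%:Z - (j * m)%N%:Z = (n - j.+1 * m)%N%:Z by [].
by apply/eqP; rewrite subr_eq -PoszD; apply/eqP; congr Posz; lia.
Qed.

Theorem mainTheorem11 (n r : nat) (hn : (1 <= n)%N) (hr : (1 <= r)%N) :
  \sum_(1 <= k < n.+1) ('C(k.-1, r.-1))%:R * omega (n - k)%N%:Z =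
  \sum_(1 <= m < n.+1) (c_psi m r)%:R * Omega m (n - m)%N :> int.
Proof.
transitivity (\sum_(1 <= m < n.+1) \sum_(1 <= k < n.+1 | (m %| k)%N)
                (c_psi m r)%:R * omega (n - k)%N%:Z); last first.
  apply: eq_big_nat => m /andP[m_gt0 lt_mn].
  by rewrite Omega_sum_multiples ?m_gt0 // mulr_sumr.
rewrite (exchange_big_dep_nat xpredT) //=; apply: eq_big_nat => k /andP[k_gt0 lt_kn].
by rewrite -mulr_suml -natr_sum sum_c_psi_divisors.
Qed.
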